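(* Let $B_1\in\mathbf B$ and $B_2\in\mathrm{Mat}_{2,3}(\mathbb R)$ with $B_2\notin B_1\mathbb R$. Then $\mu\{x: p_{B_1,B_2}(x)\ne0\}>0$.
   Context: $\mathbf A=\{A_i\}_{i\in\mathcal I}\subset\mathrm{SL}(3,\mathbb R)_{>0}$ finite (determinant one, positive entries), generating a semigroup Zariski dense in $\mathrm{SL}(3,\mathbb R)$. For a $3\times3$ matrix $A$ with rows $r_{A,j}$, $\tilde x=(x_1,x_2,1)$ and $\varphi_A(x)=(\langle r_{A,1},\tilde x\rangle/\langle r_{A,3},\tilde x\rangle,\langle r_{A,2},\tilde x\rangle/\langle r_{A,3},\tilde x\rangle)$. $p$ positive probability vector, $\mu$ the compactly supported probability on $\mathbb R^2_{>0}$ with $\mu=\sum_ip_i\varphi_{A_i}\mu$. $\mathbf B$: matrices $B\in\mathrm{Mat}_{2,3}(\mathbb R)$ with rows $r_{B,1},r_{B,2}$ such that $|r_{B,2}|=1$, $r_{B,2}$ has nonnegative coordinates and $r_{B,1},r_{B,2}$ are linearly independent. For $B_1,B_2\in\mathrm{Mat}_{2,3}(\mathbb R)$, $p_{B_1,B_2}(x)=\det\begin{pmatrix}\langle r_{B_1,1},\tilde x\rangle&\langle r_{B_2,1},\tilde x\rangle\\\langle r_{B_1,2},\tilde x\rangle&\langle r_{B_2,2},\tilde x\rangle\end{pmatrix}$ for $x\in\mathbb R^2$. *)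

From HB Require Import structures.
From mathcomp Require Import all_boot all_order all_algebra.
From mathcomp Require Import all_classical all_reals all_analysis.
Set Implicit Arguments. Unset Strict Implicit. Unset Printing Implicit Defensive.
Import Order.TTheory GRing.Theory Num.Theory.
Import numFieldNormedType.Exports.
Local Open Scope ring_scope.
Local Open Scope classical_set_scope.

Definition xtilde (R : realType) (x : R * R) : 'cV[R]_3 :=
  \col_(i < 3) [:: x.1; x.2; 1] `_ i.

Definition rowdot (R : realType) m (A : 'M[R]_(m, 3)) (j : 'I_m) (x : R * R) : R :=
  (A *m xtilde x) j 0.

Definition phiA (R : realType) (A : 'M[R]_3) (x : R * R) : R * R :=
  (rowdot A 0 x / rowdot A 2%:R x, rowdot A 1 x / rowdot A 2%:R x).

Definition pB (R : realType) (B1 B2 : 'M[R]_(2, 3)) (x : R * R) : R :=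
  rowdot B1 0 x * rowdot B2 1 x - rowdot B2 0 x * rowdot B1 1 x.

Definition in_Bset (R : realType) (B : 'M[R]_(2, 3)) : Prop :=
  \sum_(j < 3) (B 1 j) ^+ 2 = 1 /\ (forall j, 0 <= B 1 j) /\ row_free B.

Inductive in_semigroup (R : realType) (I : finType) (A : I -> 'M[R]_3) : 'M[R]_3 -> Prop :=
| sg_gen i : in_semigroup A (A i)
| sg_mul M N : in_semigroup A M -> in_semigroup A N -> in_semigroup A (M *m N).

Inductive polyfun (R : realType) : ('M[R]_3 -> R) -> Prop :=
| pf_const c : polyfun (fun _ => c)
| pf_coord i j : polyfun (fun M => M i j)
| pf_add f g : polyfun f -> polyfun g -> polyfun (fun M => f M + g M)
| pf_mul f g : polyfun f -> polyfun g -> polyfun (fun M => f M * g M).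

Definition zariski_dense_SL3 (R : realType) (S : 'M[R]_3 -> Prop) : Prop :=
  forall f, polyfun f -> (forall M, S M -> f M = 0) ->
  forall M, \det M = 1 -> f M = 0.

From HB Require Import structures.
From mathcomp Require Import all_boot all_order all_algebra.
From mathcomp Require Import all_classical all_reals all_analysis.
From mathcomp Require Import ring lra measurable_realfun.
Import Order.TTheory GRing.Theory Num.Theory.
Import numFieldNormedType.Exports.
Local Open Scope ring_scope.
Local Open Scope classical_set_scope.
Set Implicit Arguments. Unset Strict Implicit. Unset Printing Implicit Defensive.

(* Suppose p_{B1,B2} vanished mu-almost everywhere. By stationarity so would
   p_{B1,B2} o phi_{A_i}, and on the positive quadrant, which carries mu, this
   function is p_{B1 A_i, B2 A_i} divided by a positive square. Iterating along
   words, p_{B1 g, B2 g} vanishes almost everywhere for every g in the semigroup;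
   as there are countably many words, a single point x is a common zero. Then
   g |-> p_{B1 g, B2 g}(x) is a polynomial vanishing on the semigroup, hence on
   SL(3,R) by Zariski density. Since SL(3,R) maps x~ onto every vector v with
   v_3 <> 0, the vectors B1 v and B2 v are parallel for all such v, hence for all
   v, and for B1 of rank 2 this forces B2 to be a multiple of B1. *)

Section Det2.
Variable R : comNzRingType.
Implicit Types (u w a : 'cV[R]_2) (s t : R).

Definition det2 u w : R := u 0 0 * w 1 0 - w 0 0 * u 1 0.

Lemma det2_scale s u w : det2 (s *: u) (s *: w) = s ^+ 2 * det2 u w.
Proof. by rewrite /det2 !mxE; ring. Qed.

Lemma det2_addr_scale u w s : det2 u (w + s *: u) = det2 u w.
Proof. by rewrite /det2 !mxE; ring. Qed.

Lemma det2_shift u u' w w' t :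
  det2 (u + t *: u') (w + t *: w') =
  det2 u w + t * (det2 u w' + det2 u' w) + t ^+ 2 * det2 u' w'.
Proof. by rewrite /det2 !mxE; ring. Qed.

Lemma mulmx2_entry (M : 'M[R]_2) a i :
  (M *m a) i 0 = M i 0 * a 0 0 + M i 1 * a 1 0.
Proof.
rewrite mxE big_ord_recl big_ord1.
by congr (M i _ * a _ 0 + M i _ * a _ 0); apply: val_inj.
Qed.

Lemma det2_nondegenerate w : (forall a, det2 a w = 0) -> w = 0.
Proof.
move=> w0; have := w0 (delta_mx 0 0); have := w0 (delta_mx 1 0).
rewrite /det2 !mxE /= mul0r sub0r mulr1 mul1r mulr0 subr0.
move=> /eqP; rewrite oppr_eq0 => /eqP w00 w10; apply/matrixP => i j; rewrite ord1 mxE.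
by case: i => [[|[|//]] Hi]; [rewrite -[RHS]w00 | rewrite -[RHS]w10];
  congr (w _ 0); apply: val_inj.
Qed.

Lemma det2_eq0_scalar_mx (M : 'M[R]_2) :
  (forall a, det2 a (M *m a) = 0) -> M = (M 0 0)%:M.
Proof.
move=> M0; have := M0 (delta_mx 0 0); have := M0 (delta_mx 1 0).
have := M0 (const_mx 1); rewrite /det2 !mulmx2_entry !mxE /=.
rewrite !(mul0r, mul1r, mulr0, mulr1, add0r, addr0, sub0r, subr0).
move=> diag /eqP; rewrite oppr_eq0 => /eqP M01 M10.
move: diag; rewrite M01 M10 add0r addr0 => /subr0_eq M11.
apply/matrixP => i j; rewrite !mxE.
by case: i => [[|[|//]] Hi]; case: j => [[|[|//]] Hj]; rewrite /= ?mulr1n ?mulr0n;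
  [| rewrite -[RHS]M01 | rewrite -[RHS]M10 | rewrite -[RHS]M11];
  congr (M _ _); apply: val_inj.
Qed.
End Det2.

Lemma det2_mulmx_eq0_proportional (F : fieldType) n (B1 B2 : 'M[F]_(2, n)) :
  row_free B1 -> (forall v, det2 (B1 *m v) (B2 *m v) = 0) -> exists c, B2 = c *: B1.
Proof.
move=> /row_freeP[X B1X] B12; set c := (B2 *m X) 0 0.
have B2X : B2 *m X = c%:M.
  by apply: det2_eq0_scalar_mx => a; have := B12 (X *m a); rewrite !mulmxA B1X mul1mx.
exists c; apply: subr0_eq; set N := B2 - c *: B1.
have NX : N *m X = 0 by rewrite mulmxBl B2X -scalemxAl B1X scalemx1 subrr.
have B2E : B2 = N + c *: B1 by rewrite subrK.
have Nv (v : 'cV_n) : N *m v = 0.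
  apply: det2_nondegenerate => a; set v' := v + X *m (a - B1 *m v).
  have B1v' : B1 *m v' = a by rewrite mulmxDr mulmxA B1X mul1mx addrC subrK.
  have Nv' : N *m v' = N *m v by rewrite mulmxDr mulmxA NX mul0mx addr0.
  by have := B12 v'; rewrite B2E mulmxDl -scalemxAl B1v' Nv' det2_addr_scale.
apply/matrixP => i j; have /matrixP/(_ i 0) := Nv (delta_mx j 0).
by rewrite -colE !mxE.
Qed.

Section Quadratic.
Variable R : realFieldType.

Lemma quadratic_const_eq0 (a b c : R) :
  (forall t, t != 0 -> a + t * b + t ^+ 2 * c = 0) -> a = 0.
Proof.
move=> q0; have q0n n : a + n.+1%:R * b + n.+1%:R ^+ 2 * c = 0.
  by apply: q0; rewrite pnatr_eq0.
by have := q0n 0; have := q0n 1; have := q0n 2; rewrite !expr2; lra.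
Qed.

Lemma det2_mulmx_eq0_of_coord_neq0 n (B1 B2 : 'M[R]_(2, n)) (k : 'I_n) :
  (forall v : 'cV_n, v k 0 != 0 -> det2 (B1 *m v) (B2 *m v) = 0) ->
  forall v : 'cV_n, det2 (B1 *m v) (B2 *m v) = 0.
Proof.
move=> B12 v; have [vk0|] := eqVneq (v k 0) 0; last exact: B12.
pose e : 'cV[R]_n := delta_mx k 0.
apply: (quadratic_const_eq0 (b := det2 (B1 *m v) (B2 *m e) + det2 (B1 *m e) (B2 *m v))
                            (c := det2 (B1 *m e) (B2 *m e))) => t t0.
have := B12 (v + t *: e); rewrite !mulmxDr -!scalemxAr det2_shift; apply.
by rewrite /e !mxE vk0 eqxx mulr1 add0r.
Qed.
End Quadratic.

Section ProjectiveAction.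
Variable R : realType.
Implicit Types (x : R * R) (A : 'M[R]_3).

Lemma pB_det2 (C D : 'M[R]_(2, 3)) x :
  pB C D x = det2 (C *m xtilde x) (D *m xtilde x).
Proof. by []. Qed.

Lemma rowdotE m (M : 'M[R]_(m, 3)) j x :
  rowdot M j x = M j 0 * x.1 + M j 1 * x.2 + M j 2%:R.
Proof.
rewrite /rowdot /xtilde !mxE !big_ord_recl big_ord0 !mxE /= addr0 mulr1 addrA.
by congr (M j _ * _ + M j _ * _ + M j _); apply: val_inj.
Qed.

Lemma rowdot_gt0 m (M : 'M[R]_(m, 3)) j x :
  (forall k, 0 < M j k) -> 0 < x.1 -> 0 < x.2 -> 0 < rowdot M j x.
Proof. by move=> M0 x1 x2; rewrite rowdotE !addr_gt0 ?mulr_gt0. Qed.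

Lemma mulmx_xtilde_phiA A x : rowdot A 2%:R x != 0 ->
  A *m xtilde x = rowdot A 2%:R x *: xtilde (phiA A x).
Proof.
move=> r2; apply/matrixP => i j; rewrite ord1 -/(rowdot A i x) !mxE.
by case: i => [[|[|[|//]]] Hi]; rewrite /= ?mulr1 1?mulrC ?divfK //;
  congr (rowdot A _ x); apply: val_inj.
Qed.

Lemma pB_mulmx_phiA (C D : 'M[R]_(2, 3)) A x : rowdot A 2%:R x != 0 ->
  pB (C *m A) (D *m A) x = rowdot A 2%:R x ^+ 2 * pB C D (phiA A x).
Proof.
by move=> r2; rewrite !pB_det2 -!mulmxA mulmx_xtilde_phiA // -!scalemxAr det2_scale.
Qed.

(* Where the denominator vanishes, division by 0 makes [phiA A x = (0, 0)]. *)
Lemma phiA_preimage_pB (C D : 'M[R]_(2, 3)) A :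
  phiA A @^-1` [set y | pB C D y != 0] =
  [set x | rowdot A 2%:R x != 0 /\ pB (C *m A) (D *m A) x != 0] `|`
  ([set x | rowdot A 2%:R x = 0] `&` [set _ | pB C D (0, 0) != 0]).
Proof.
apply/seteqP; split => x /=; have [r2|r2] := eqVneq (rowdot A 2%:R x) 0.
- by rewrite /phiA r2 invr0 !mulr0 => ?; right.
- by move=> pz; left; split=> //; rewrite pB_mulmx_phiA // mulf_neq0 // expf_neq0.
- by case=> [[]|[_]]; rewrite ?r2 ?eqxx // /phiA r2 invr0 !mulr0.
- case=> [[_]|[r20 _]]; last by rewrite r20 eqxx in r2.
  by rewrite pB_mulmx_phiA // mulf_eq0 negb_or => /andP[].
Qed.

Lemma SL3_xtilde_transitive (x : R * R) (v : 'cV[R]_3) : v 2%:R 0 != 0 ->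
  exists M : 'M[R]_3, \det M = 1 /\ M *m xtilde x = v.
Proof.
move=> v2; pose c := v 2%:R 0.
exists (\matrix_(i, j) nth 0 (nth [::] [:: [:: c^-1; 0; v 0 0 - x.1 / c];
                                           [:: 0; 1; v 1 0 - x.2];
                                           [:: 0; 0; c]] i) j); split.
  rewrite -det_tr det_trig; last first.
    apply/is_trig_mxP => i j; rewrite !mxE.
    by case: i => [[|[|[|i]]] Hi] //; case: j => [[|[|[|j]]] Hj].
  by rewrite !big_ord_recr big_ord0 /= !mxE /= mul1r mulr1 mulVf.
apply/matrixP => i j; rewrite ord1 !mxE !big_ord_recl big_ord0 !mxE /=.
case: i => [[|[|[|//]]] Hi];
  [transitivity (v 0 0) | transitivity (v 1 0) | transitivity (v 2%:R 0)];
  rewrite /c /=; (by field) || (by congr (v _ 0); apply: val_inj).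
Qed.

Lemma det2_mulmx_eq0_of_SL3 (C D : 'M[R]_(2, 3)) (x : R * R) :
  (forall M, \det M = 1 -> pB (C *m M) (D *m M) x = 0) ->
  forall v, det2 (C *m v) (D *m v) = 0.
Proof.
move=> CD; apply: (det2_mulmx_eq0_of_coord_neq0 (k := 2%:R)) => v v2.
have [M [detM Mx]] := SL3_xtilde_transitive x v2.
by have := CD M detM; rewrite pB_det2 -!mulmxA Mx.
Qed.
End ProjectiveAction.

Section Measurability.
Variable R : realType.

Lemma measurable_neq0 d (T : measurableType d) (h : T -> R) :
  measurable_fun setT h -> measurable [set x | h x != 0].
Proof.
move=> mh; have := mh measurableT _ (measurableC (measurable_set1 0)).
by rewrite setTI; congr measurable; apply/seteqP; split => x /= /eqP.
Qed.

Lemma measurable_eq0 d (T : measurableType d) (h : T -> R) :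
  measurable_fun setT h -> measurable [set x | h x = 0].
Proof. by move=> mh; have := mh measurableT _ (measurable_set1 0); rewrite setTI. Qed.

Lemma measurable_set_cst d (T : measurableType d) (P : Prop) :
  measurable [set _ : T | P].
Proof.
have [p|np] := pselect P.
  by rewrite (_ : [set _ | P] = setT) //; apply/seteqP; split.
by rewrite (_ : [set _ | P] = set0) //; apply/seteqP; split.
Qed.

Lemma measurable_rowdot m (M : 'M[R]_(m, 3)) j :
  measurable_fun setT (rowdot M j).
Proof.
have -> : rowdot M j = fun x => M j 0 * x.1 + M j 1 * x.2 + M j 2%:R.
  by apply/funext => x; rewrite rowdotE.
apply: measurable_funD => //; apply: measurable_funD; apply: measurable_funM;
  by [exact: measurable_cst | exact: measurable_fst | exact: measurable_snd].
Qed.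

Lemma measurable_pB (C D : 'M[R]_(2, 3)) : measurable_fun setT (pB C D).
Proof.
by apply: measurable_funB; apply: measurable_funM; exact: measurable_rowdot.
Qed.

Lemma measurable_phiA_preimage_pB (C D : 'M[R]_(2, 3)) A :
  measurable (phiA A @^-1` [set y | pB C D y != 0]).
Proof.
rewrite phiA_preimage_pB; apply: measurableU; apply: measurableI.
- by apply: measurable_neq0; apply: measurable_rowdot.
- by apply: measurable_neq0; apply: measurable_pB.
- by apply: measurable_eq0; apply: measurable_rowdot.
- exact: measurable_set_cst.
Qed.

Lemma measurable_pos_quadrant : measurable [set x : R * R | 0 < x.1 /\ 0 < x.2].
Proof.
have -> : [set x : R * R | 0 < x.1 /\ 0 < x.2] =
    fst @^-1` `]0, +oo[ `&` snd @^-1` `]0, +oo[.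
  by apply/seteqP; split => x /=; rewrite !in_itv /= !andbT.
by apply: measurableI; rewrite -[X in measurable X]setTI;
  [exact: measurable_fst | exact: measurable_snd]; exact: measurable_itv.
Qed.
End Measurability.

Section PolynomialFunctions.
Variable R : realType.

Lemma polyfun_sub (f g : 'M[R]_3 -> R) :
  polyfun f -> polyfun g -> polyfun (fun M => f M - g M).
Proof.
move=> pf pg; have -> : (fun M => f M - g M) = fun M => f M + (-1) * g M.
  by apply/funext => M; rewrite mulN1r.
by apply: pf_add => //; apply: pf_mul => //; apply: pf_const.
Qed.

Lemma polyfun_sum n (F : 'I_n -> 'M[R]_3 -> R) :
  (forall k, polyfun (F k)) -> polyfun (fun M => \sum_(k < n) F k M).
Proof.
elim: n F => [|n IH] F pF.
  have -> : (fun M => \sum_(k < 0) F k M) = fun=> 0 by apply/funext => M; rewrite big_ord0.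
  exact: pf_const.
have -> : (fun M => \sum_(k < n.+1) F k M) =
    fun M => \sum_(k < n) F (widen_ord (leqnSn n) k) M + F ord_max M.
  by apply/funext => M; rewrite big_ord_recr.
by apply: pf_add => //; apply: IH.
Qed.

Lemma polyfun_mulmx_entry m n (B : 'M[R]_(m, 3)) (Y : 'M[R]_(3, n)) i j :
  polyfun (fun M => (B *m M *m Y) i j).
Proof.
have -> : (fun M => (B *m M *m Y) i j) = fun M => \sum_k (\sum_l B i l * M l k) * Y k j.
  by apply/funext => M; rewrite mxE; apply: eq_bigr => k _; rewrite mxE.
apply: polyfun_sum => k; apply: pf_mul; last exact: pf_const.
by apply: polyfun_sum => l; apply: pf_mul; [exact: pf_const | exact: pf_coord].
Qed.

Lemma polyfun_pB_mulmx (C D : 'M[R]_(2, 3)) x :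
  polyfun (fun M => pB (C *m M) (D *m M) x).
Proof. by apply: polyfun_sub; apply: pf_mul; apply: polyfun_mulmx_entry. Qed.

End PolynomialFunctions.

Lemma in_semigroup_prod (R : realType) (I : finType) (A : I -> 'M[R]_3) M :
  in_semigroup A M -> exists w : seq I, M = \prod_(i <- w) A i.
Proof.
elim=> [i | M1 M2 _ [w ->] _ [w' ->]]; first by exists [:: i]; rewrite big_seq1.
by exists (w ++ w'); rewrite big_cat mulmxE.
Qed.

Lemma stationary_null_preimage d (T : measurableType d) (R : realType) (I : finType)
    (mu : {measure set T -> \bar R}) (f : I -> T -> T) (p : I -> R) (E : set T) :
  (forall i, 0 < p i) -> mu E = (\sum_i (p i)%:E * mu (f i @^-1` E))%E ->
  mu E = 0%E -> forall i, mu (f i @^-1` E) = 0%E.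
Proof.
move=> p_gt0 muE E0 i; move: muE; rewrite E0 => /esym/eqP.
rewrite seq_psume_eq0 => [/allP/(_ i (mem_index_enum i))|j _].
  by rewrite /= mule_eq0 eqe (gt_eqF (p_gt0 i)) => /eqP.
by rewrite mule_ge0 // lee_fin ltW.
Qed.

Lemma negligible_bigcup_countable d (T : sigmaRingType d) (R : realFieldType)
    (mu : {measure set T -> \bar R}) (J : countType) (F : J -> set T) :
  (forall j, mu.-negligible (F j)) -> mu.-negligible (\bigcup_j F j).
Proof.
move=> nF; pose G n := if unpickle n is Some j then F j else set0.
apply: (negligibleS _ (negligible_bigcup (F := G) _)).
  by move=> t [j _ Fjt]; exists (pickle j) => //; rewrite /G pickleK.
by move=> n; rewrite /G; case: unpickle => [j|]; [exact: nF | exact: negligible_set0].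
Qed.

Lemma probability_negligible_compl_nonempty d (T : measurableType d) (R : realType)
    (P : probability T R) (N : set T) :
  P.-negligible N -> exists x, ~ N x.
Proof.
move=> nN; apply: contrapT => noN.
have : P.-negligible setT.
  by apply: negligibleS nN => x _; apply: contrapT => Nx; apply: noN; exists x.
move/negligibleP => /(_ measurableT) P0.
by have /eqP := etrans (esym P0) (probability_setT P); rewrite eqe eq_sym oner_eq0.
Qed.

Section StationaryNegligible.
Variables (R : realType) (I : finType) (A : I -> 'M[R]_3) (p : I -> R).
Variable mu : {measure set (R * R) -> \bar R}.
Hypothesis A_gt0 : forall i j k, 0 < A i j k.
Hypothesis p_gt0 : forall i, 0 < p i.
Hypothesis mu_quadrant : mu (~` [set x | 0 < x.1 /\ 0 < x.2]) = 0%E.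
Hypothesis mu_stationary : forall E, measurable E ->
  mu E = (\sum_i (p i)%:E * mu (phiA (A i) @^-1` E))%E.

Lemma negligible_pB_mulmx (C D : 'M[R]_(2, 3)) i :
  mu.-negligible [set x | pB C D x != 0] ->
  mu.-negligible [set x | pB (C *m A i) (D *m A i) x != 0].
Proof.
move=> nCD; have mCD : measurable [set x | pB C D x != 0].
  by apply: measurable_neq0; apply: measurable_pB.
have nQc : mu.-negligible (~` [set x | 0 < x.1 /\ 0 < x.2]).
  by apply/negligibleP => //; apply: measurableC; apply: measurable_pos_quadrant.
have npre : mu.-negligible (phiA (A i) @^-1` [set x | pB C D x != 0]).
  apply/negligibleP; first exact: measurable_phiA_preimage_pB.
  by apply: (stationary_null_preimage p_gt0 (mu_stationary mCD)); apply/negligibleP.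
apply: negligibleS (negligibleU npre nQc) => x /=.
have [[x1 x2]|] := pselect (0 < x.1 /\ 0 < x.2); last by right.
have r2 : rowdot (A i) 2%:R x != 0 := lt0r_neq0 (rowdot_gt0 (A_gt0 i _) x1 x2).
by rewrite pB_mulmx_phiA // mulf_eq0 negb_or => /andP[_ ?]; left.
Qed.

Lemma negligible_pB_mulmx_prod (C D : 'M[R]_(2, 3)) (w : seq I) :
  mu.-negligible [set x | pB C D x != 0] ->
  mu.-negligible [set x | pB (C *m \prod_(i <- w) A i) (D *m \prod_(i <- w) A i) x != 0].
Proof.
elim: w C D => [|i w IH] C D nCD; first by rewrite big_nil !mulmx1.
by rewrite big_cons -mulmxE !mulmxA; apply/IH/negligible_pB_mulmx.
Qed.
End StationaryNegligible.

Unset Implicit Arguments.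

Theorem lemma4p10 (R : realType) (I : finType) (A : I -> 'M[R]_3)
  (p : I -> R) (mu : probability (R * R)%type R)
  (B1 B2 : 'M[R]_(2, 3)) :
  (forall i, \det (A i) = 1) ->
  (forall i j k, 0 < A i j k) ->
  zariski_dense_SL3 (in_semigroup A) ->
  (forall i, 0 < p i) -> \sum_i p i = 1 ->
  mu (~` [set x | 0 < x.1 /\ 0 < x.2]) = 0%E ->
  (exists K : set (R * R), compact K /\ mu (~` K) = 0%E) ->
  (forall E : set (R * R), measurable E ->
     mu E = (\sum_i (p i)%:E * mu (phiA (A i) @^-1` E))%E) ->
  in_Bset B1 ->
  (forall c : R, B2 != c *: B1) ->
  (0 < mu [set x | pB B1 B2 x != 0%R])%E.
Proof.
move=> _ A_gt0 A_dense p_gt0 _ mu_quadrant _ mu_stationary [_ [_ B1_free]] B2_notin.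
rewrite lt0e measure_ge0 andbT; apply/negP => /eqP mu0.
have nZ (w : seq I) := negligible_pB_mulmx_prod A_gt0 p_gt0 mu_quadrant mu_stationary w
  ((negligibleP _ (measurable_neq0 (measurable_pB B1 B2))).2 mu0).
have [x Zx] := probability_negligible_compl_nonempty (negligible_bigcup_countable nZ).
have SL3_x : forall M, \det M = 1 -> pB (B1 *m M) (B2 *m M) x = 0.
  apply: (A_dense _ (polyfun_pB_mulmx B1 B2 x)) => _ /in_semigroup_prod[w ->].
  by apply/eqP/negPn/negP => pz; apply: Zx; exists w.
have [c B2E] := det2_mulmx_eq0_proportional B1_free (det2_mulmx_eq0_of_SL3 SL3_x).
by move: (B2_notin c); rewrite B2E eqxx.
Qed.
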